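(* Let $\epsilon > 0$ and $\delta \in (0,1)$, and set $d = \lceil \ln(1/\delta) \rceil$ and $w = 1 + \lceil e/\epsilon \rceil$. Consider a stream of $N$ records. Each record $r$ has a primary key (record id) $r_0$ and values $r_1,\dots,r_p$ on $p$ searchable attributes $a_1,\dots,a_p$; $\mathcal{D}(a_i)$ denotes the domain of $a_i$. Choose $d \cdot p$ hash functions $h_i^j : \mathcal{D}(a_i) \to \{1,\dots,w\}$, for $i \in \{1,\dots,p\}$ and $j \in \{1,\dots,d\}$, uniformly at random from a pairwise-independent family. Build $p$ arrays $CM_1,\dots,CM_p$, each of size $w \times d$, every cell of which initially holds an empty set of record ids. Each record $r$ is inserted by adding $r_0$ to the cell $CM_i[j, h_i^j(r_i)]$ for every $i \in \{1,\dots,p\}$ and every $j \in \{1,\dots,d\}$. A query $q = (q_1,\dots,q_p)$ consists of one equality predicate $a_i = q_i$ on each of the $p$ attributes. Let $f(q)$ be the number of records $r$ in the stream with $r_i = q_i$ for all $i$. Define the estimate $$\hat f(q) = \left| \bigcap_{i \in \{1,\dots,p\},\, j \in \{1,\dots,d\}} CM_i[j, h_i^j(q_i)] \right|.$$ Then $$\Pr\big(|\hat f(q) - f(q)| \le \epsilon^d (N - f(q)) \le \epsilon^d N\big) \ge 1 - \delta.$$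
   Context: This describes a sketch that extends the Count-min sketch by storing record ids in each cell. The probability is taken over the random choice of the hash functions. Record ids are distinct across records. *)

From HB Require Import structures.
From mathcomp Require Import all_boot all_order all_algebra.
From mathcomp Require Import reals sequences exp.
Set Implicit Arguments. Unset Strict Implicit. Unset Printing Implicit Defensive.
Import Order.TTheory GRing.Theory Num.Theory.
Local Open Scope ring_scope.

Record record (p : nat) (D : 'I_p -> eqType) (Id : eqType) :=
  Rec { rid : Id; rval : forall i : 'I_p, D i }.

(* The cell CM_i[j, x] after inserting the whole stream s, where
   hij = h_i^j : set (here: list) of the ids of the records r with
   h_i^j(r_i) = x.  Columns {1..w} are represented by 'I_w. *)
Definition cell (p : nat) (D : 'I_p -> eqType) (Id : eqType) (w : nat)
  (s : seq (record D Id)) (i : 'I_p) (hij : D i -> 'I_w) (x : 'I_w) : seq Id :=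
  [seq rid r | r <- s & hij (rval r i) == x].

Definition freq (p : nat) (D : 'I_p -> eqType) (Id : eqType)
  (s : seq (record D Id)) (q : forall i : 'I_p, D i) : nat :=
  count (fun r => [forall i, rval r i == q i]) s.

(* \hat f(q): cardinality of the intersection over all i, j of the cells
   CM_i[j, h_i^j(q_i)]  (all cells only contain ids of the stream). *)
Definition fhat (p d w : nat) (D : 'I_p -> eqType) (Id : eqType)
  (s : seq (record D Id)) (h : forall i : 'I_p, 'I_d -> D i -> 'I_w)
  (q : forall i : 'I_p, D i) : nat :=
  count (fun x => [forall i : 'I_p, forall j : 'I_d,
                     x \in cell s (h i j) (h i j (q i))])
        (undup (map (@rid p D Id) s)).

(* A pairwise-independent (strongly 2-universal) family of hash functions
   A -> {1..w}, indexed by the finite type K (drawing k uniformly from K):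
   for x <> y and any a b, Pr_k[f_k x = a /\ f_k y = b] = 1/w^2. *)
Definition pairwise_indep (w : nat) (A : eqType) (K : finType)
  (fam : K -> A -> 'I_w) : Prop :=
  forall x y : A, x != y -> forall a b : 'I_w,
    (#|[set k | (fam k x == a) && (fam k y == b)]| * w ^ 2 = #|K|)%N.

Definition prob (R : numFieldType) (Omega : finType) (E : pred Omega) : R :=
  #|E|%:R / #|Omega|%:R.

(* The sample space: an independent choice of one member of the family of
   attribute i for each pair (i, j), i.e. of h_i^j. *)
Definition hashes (p d w : nat) (D : 'I_p -> eqType) (K : 'I_p -> finType)
  (fam : forall i : 'I_p, K i -> D i -> 'I_w)
  (omega : {dffun forall ij : 'I_p * 'I_d, K ij.1}) :
  forall i : 'I_p, 'I_d -> D i -> 'I_w :=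
  fun i j => fam i (omega (i, j)).

From HB Require Import structures.
From mathcomp Require Import all_boot all_order all_algebra.
From mathcomp Require Import reals sequences exp.
From mathcomp Require Import ring lra.
Import Order.TTheory GRing.Theory Num.Theory.

(* Since record ids are distinct, the estimate counts exactly the records
   whose hashes collide with those of q in all d * p cells: the f(q) records
   matching q plus the false positives X, so |fhat(q) - f(q)| = X.  A record
   differing from q on an attribute i collides with q under the d independent
   hashes h_i^1, ..., h_i^d with probability w^-d by pairwise independence,
   hence E[X] <= (N - f(q)) / w^d, and Markov's inequality bounds the
   probability of X > eps^d (N - f(q)) by (eps w)^-d <= e^-d <= delta. *)

(* Records have no decidable equality, so membership in s is expressed by a
   splitting of s. *)
Lemma eq_count_split (T : Type) (P Q : pred T) (s : seq T) :
  (forall s1 x s2, s = s1 ++ x :: s2 -> P x = Q x) -> count P s = count Q s.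
Proof.
elim: s => //= x s IHs PQ.
rewrite (PQ [::] x s) // IHs // => s1 y s2 s_eq.
by apply: (PQ (x :: s1)); rewrite s_eq.
Qed.

Lemma mem_map_filter_uniq (T : Type) (U : eqType) (f : T -> U) (g : pred T)
    s1 x s2 :
  uniq (map f (s1 ++ x :: s2)) -> (f x \in map f (filter g (s1 ++ x :: s2))) = g x.
Proof.
rewrite map_cat cat_uniq /= => /and3P[_ /norP[fx_s1 _] /andP[fx_s2 _]].
have notin_filter t : f x \notin map f t -> f x \notin map f (filter g t).
  apply: contra; rewrite -!has_pred1 !has_map !has_count count_filter.
  by move/leq_trans; apply; apply: sub_count => z /andP[].
rewrite filter_cat map_cat mem_cat (negbTE (notin_filter _ fx_s1)) /=.
by case: (g x); rewrite /= ?inE ?eqxx ?(negbTE (notin_filter _ fx_s2)).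
Qed.

Definition matches {p} {D : 'I_p -> eqType} {Id : eqType}
    (q : forall i : 'I_p, D i) (r : record D Id) : bool :=
  [forall i, rval r i == q i].

Definition collides {p d w} {D : 'I_p -> eqType} {Id : eqType}
    (h : forall i : 'I_p, 'I_d -> D i -> 'I_w) (q : forall i : 'I_p, D i)
    (r : record D Id) : bool :=
  [forall i, forall j, h i j (rval r i) == h i j (q i)].

Lemma fhat_count_collides p d w (D : 'I_p -> eqType) (Id : eqType)
    (s : seq (record D Id)) (h : forall i : 'I_p, 'I_d -> D i -> 'I_w) q :
  uniq (map (@rid p D Id) s) -> fhat s h q = count (collides h q) s.
Proof.
move=> uniq_ids; rewrite /fhat undup_id // count_map.
apply: eq_count_split => s1 r s2 s_eq /=.
apply: eq_forallb => i; apply: eq_forallb => j.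
by rewrite /cell s_eq mem_map_filter_uniq // -s_eq.
Qed.

Lemma fhat_freqE p d w (D : 'I_p -> eqType) (Id : eqType)
    (s : seq (record D Id)) (h : forall i : 'I_p, 'I_d -> D i -> 'I_w) q :
  uniq (map (@rid p D Id) s) ->
  fhat s h q = freq s q + count [pred r | collides h q r && ~~ matches q r] s.
Proof.
move=> uniq_ids; rewrite fhat_count_collides // -[freq s q]/(count (matches q) s).
set X := [pred r | _ && _].
have no_overlap : count (predI (matches q) X) s = 0.
  by rewrite (@eq_count _ _ pred0) ?count_pred0 // => r /=; rewrite andbCA andbN andbF.
rewrite -count_predUI no_overlap addn0; apply: eq_count => r /=.
case: (boolP (matches q r)) => [/forallP m_r | _]; last by rewrite andbT.
by apply/forallP => i; apply/forallP => j; rewrite (eqP (m_r i)).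
Qed.

Lemma card_collision_pairwise_indep w (A : eqType) (K : finType)
    (fam : K -> A -> 'I_w) x y :
  pairwise_indep fam -> x != y -> #|[pred k | fam k x == fam k y]| * w = #|K|.
Proof.
move=> indep neq_xy; case: w fam indep => [|w] fam indep.
  by rewrite muln0 eq_card0 // => k; have [] := fam k x.
apply/eqP; rewrite -(eqn_pmul2r (ltn0Sn w)) -mulnA mulnn.
rewrite -sum1_card (partition_big (fam^~ x) xpredT) //= big_distrl /=.
rewrite (eq_bigr (fun=> #|K|)) ?sum_nat_const ?card_ord 1?mulnC // => a _.
rewrite -(indep x y neq_xy a a) sum1_card; congr (_ * _); apply: eq_card => k.
by rewrite unfold_in !inE /= andbC; case: (fam k x =P a) => // ->; rewrite eq_sym.
Qed.

Lemma card_family_mul_le (aT : finType) (rT : aT -> finType)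
    (F : forall x, pred (rT x)) (c : aT -> nat) :
  (forall x, #|F x| * c x <= #|rT x|) ->
  #|(family F : simpl_pred {dffun forall x, rT x})| * \prod_x c x
    <= #|{dffun forall x, rT x}|.
Proof.
move=> le_F; rewrite card_family card_dep_ffun !foldrE !big_map -enumT !big_enum.
by rewrite -big_split; apply: leq_prod.
Qed.

Lemma sum_count_mul_le (T : finType) (U : Type) (P : T -> pred U) (Q : pred U)
    (a b : nat) (s : seq U) :
  (forall x, #|[pred t | P t x]| * a <= Q x * b) ->
  (\sum_t count (P t) s) * a <= count Q s * b.
Proof.
move=> le_PQ; elim: s => [|x s IHs] /=; first by rewrite big1.
rewrite big_split !mulnDl leq_add //; apply: leq_trans (le_PQ x).
rewrite leq_mul2r -sum1_card [leqRHS]big_mkcond /=; apply/orP; right; apply/eq_leq.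
by apply: eq_bigr => t _; rewrite inE; case: (P t x).
Qed.

Local Open Scope ring_scope.

Lemma card_markov {R : numDomainType} {T : finType} (X : T -> R) (c : R) :
  (forall t, 0 <= X t) -> #|[pred t | c < X t]|%:R * c <= \sum_t X t.
Proof.
move=> X_ge0; rewrite mulr_natl -sumr_const.
apply: le_trans (_ : \sum_(t in [pred t | c < X t]) X t <= _).
  by apply: ler_sum => t; rewrite inE => /ltW.
by rewrite [leRHS](bigID [pred t | c < X t]) /= lerDl sumr_ge0.
Qed.

Lemma prob_ge_compl (R : realFieldType) (T : finType) (E B : pred T) (c delta : R) :
  (0 < #|T|)%N -> 0 < delta -> (forall t, t \notin B -> t \in E) ->
  #|B|%:R * c <= #|T|%:R -> delta^-1 <= c -> 1 - delta <= prob R E.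
Proof.
move=> T_gt0 delta_gt0 sub_E le_B delta_le.
have le_B' : #|B|%:R <= delta * #|T|%:R.
  apply: le_trans (_ : delta * (#|B|%:R * c) <= _); last by rewrite ler_pM2l.
  rewrite -{1}(mulVKf (lt0r_neq0 delta_gt0) #|B|%:R) ler_pM2l // mulrC.
  exact: ler_wpM2l.
have : (#|T| <= #|E| + #|B|)%N.
  by rewrite -(cardC B) addnC leq_add2r; apply/subset_leq_card/subsetP.
rewrite /prob ler_pdivlMr ?ltr0n // -(ler_nat R) natrD; lra.
Qed.

Lemma expR1_le_mul_width {R : realType} {eps : R} {w : nat} :
  0 < eps -> w%:Z = 1 + Num.ceil (expR 1 / eps) -> expR 1 <= eps * w%:R.
Proof.
move=> eps_gt0 w_def; rewrite -ler_pdivrMl // mulrC.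
rewrite pmulrn w_def intrD.
by apply: le_trans (ceil_ge _) _; rewrite lerDr.
Qed.

Lemma invr_le_expR1_depth {R : realType} {delta : R} {d : nat} :
  0 < delta -> d%:Z = Num.ceil (ln delta^-1) -> delta^-1 <= expR 1 ^+ d.
Proof.
move=> delta_gt0 d_def.
rewrite -[leLHS]lnK ?posrE ?invr_gt0 // -expRM_natl mulr1 ler_expR.
by rewrite pmulrn d_def ceil_ge.
Qed.

Section FalsePositives.

Context {p d w : nat} {D : 'I_p -> eqType} {Id : eqType} {K : 'I_p -> finType}.
Context {fam : forall i : 'I_p, K i -> D i -> 'I_w}.
Variables (s : seq (record D Id)) (q : forall i : 'I_p, D i).
Hypothesis fam_indep : forall i, pairwise_indep (fam i).

Local Notation Omega := {dffun forall ij : 'I_p * 'I_d, K ij.1}.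
Local Notation mismatches := (count (predC (matches q)) s).

Definition false_positives (omega : Omega) : nat :=
  count [pred r | collides (hashes fam omega) q r && ~~ matches q r] s.

Lemma card_collides_le (r : record D Id) :
  ~~ matches q r ->
  (#|[pred omega : Omega | collides (hashes fam omega) q r]| * w ^ d <= #|Omega|)%N.
Proof.
case/forallPn => i0 neq_i0.
pose F (ij : 'I_p * 'I_d) :=
  [pred k : K ij.1 | fam ij.1 k (rval r ij.1) == fam ij.1 k (q ij.1)].
have -> : (w ^ d = \prod_(ij : 'I_p * 'I_d) if ij.1 == i0 then w else 1)%N.
  rewrite -(pair_big xpredT xpredT (fun i (j : 'I_d) => if i == i0 then w else 1%N)) /=.
  rewrite (bigD1 i0) //= eqxx prod_nat_const card_ord big1 ?muln1 // => i.
  by move/negbTE ->; rewrite big1_eq.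
rewrite (@eq_card _ _ (family F : simpl_pred Omega)) => [|omega]; last first.
  rewrite !inE; apply/forallP/familyP => /= [coll [i j] | coll i].
    by have /forallP := coll i; apply.
  by apply/forallP => j; apply: (coll (i, j)).
apply: card_family_mul_le => -[i j] /=; case: eqP => [-> | _].
  by rewrite card_collision_pairwise_indep.
by rewrite muln1 max_card.
Qed.

Lemma false_positives_le_mismatches (omega : Omega) :
  (false_positives omega <= mismatches)%N.
Proof. by apply: sub_count => r /andP[]. Qed.

Lemma sum_false_positives_le :
  ((\sum_omega false_positives omega) * w ^ d <= mismatches * #|Omega|)%N.
Proof.
apply: sum_count_mul_le => r /=; case: (boolP (matches q r)) => [_ | /card_collides_le].
  by rewrite eq_card0 // => omega; rewrite !inE andbF.
rewrite mul1n; apply: leq_trans; rewrite leq_mul2r subset_leq_card ?orbT //.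
by apply/subsetP => omega; rewrite !inE => /andP[].
Qed.

Lemma card_many_false_positives_le {R : realFieldType} {eps : R} : 0 < eps ->
  #|[pred omega : Omega | eps ^+ d * mismatches%:R < (false_positives omega)%:R]|%:R
    * (eps * w%:R) ^+ d <= #|Omega|%:R.
Proof.
move=> eps_gt0; set B := #|_|%:R.
have [m0 | m_gt0] := posnP mismatches.
  rewrite /B eq_card0 ?mul0r // => omega; rewrite !inE m0 mulr0 ltr0n.
  by have := false_positives_le_mismatches omega; rewrite m0 leqn0 => /eqP ->.
rewrite -(@ler_pM2r _ mismatches%:R) ?ltr0n //.
have markov := card_markov (fun omega => (false_positives omega)%:R)
  (eps ^+ d * mismatches%:R) (fun _ => ler0n _ _).
have expectation : (\sum_omega (false_positives omega)%:R) * w%:R ^+ d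
    <= mismatches%:R * #|Omega|%:R :> R.
  by rewrite -natr_sum -natrX -!natrM ler_nat sum_false_positives_le.
apply: le_trans (_ : (\sum_omega (false_positives omega)%:R) * w%:R ^+ d <= _).
  have -> : B * (eps * w%:R) ^+ d * mismatches%:R
      = B * (eps ^+ d * mismatches%:R) * w%:R ^+ d by rewrite exprMn; ring.
  by rewrite ler_wpM2r ?exprn_ge0.
by rewrite [leRHS]mulrC.
Qed.

End FalsePositives.

Theorem lemma3p2 (R : realType) (eps delta : R) (d w p : nat)
  (D : 'I_p -> eqType) (Id : eqType) (K : 'I_p -> finType)
  (fam : forall i : 'I_p, K i -> D i -> 'I_w)
  (s : seq (record D Id)) (q : forall i : 'I_p, D i) :
  0 < eps -> 0 < delta < 1 ->
  d%:Z = Num.ceil (ln (delta^-1)) ->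
  w%:Z = 1 + Num.ceil (expR 1 / eps) ->
  (forall i, (0 < #|K i|)%N) ->
  (forall i, pairwise_indep (fam i)) ->
  uniq (map (@rid p D Id) s) ->
  1 - delta <=
  prob R [pred omega : {dffun forall ij : 'I_p * 'I_d, K ij.1} |
         let h := hashes fam omega in
         let N : R := (size s)%:R in
         let f : R := (freq s q)%:R in
         let fh : R := (fhat s h q)%:R in
         `|fh - f| <= eps ^+ d * (N - f) <= eps ^+ d * N].
Proof.
move=> eps_gt0 /andP[delta_gt0 _] d_def w_def K_gt0 fam_indep uniq_ids.
have Omega_gt0 : (0 < #|{dffun forall ij : 'I_p * 'I_d, K ij.1}|)%N.
  by rewrite card_dep_ffun foldrE big_map prodn_gt0.
have delta_le : delta^-1 <= (eps * w%:R) ^+ d.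
  apply: le_trans (invr_le_expR1_depth delta_gt0 d_def) _.
  apply: lerXn2r; rewrite ?nnegrE ?expR_ge0 ?mulr_ge0 ?ler0n ?(ltW eps_gt0) //.
  exact: expR1_le_mul_width.
apply: prob_ge_compl Omega_gt0 delta_gt0 _
  (card_many_false_positives_le s q fam_indep eps_gt0) delta_le => omega.
rewrite !inE -leNgt => fp_le; cbv zeta.
have size_s : size s = (freq s q + count (predC (matches q)) s)%N.
  by rewrite count_predC.
rewrite fhat_freqE // size_s !natrD addrAC subrr add0r addrAC subrr add0r.
rewrite ger0_norm // fp_le /= ler_wpM2l ?exprn_ge0 ?(ltW eps_gt0) //.
by rewrite lerDr.
Qed.
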